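(* Let $C\subseteq 2^X$ be a maximum class of VC-dimension $d$ and $D\subseteq C$ a maximum class of VC-dimension $d-1$. Let $Q$ be an incomplete cube for $(C,D)$ with source $s$ and support $\sigma$, and let $x,y\in X$ with $x\notin\sigma$ and $y\in\sigma$. Then: (i) $Q_x$ is an incomplete cube for $(C_x,D_x)$ whose source is $s_x$; (ii) $Q^y$ is an incomplete cube for $(C^y,D^y)$ whose source is $s^y$.
   Context: $X$ is a finite set, $n=|X|$; concepts are identified with characteristic functions, $c|Y$ is restriction and $C|Y=\{c|Y:c\in C\}$. $Y$ is shattered by $C$ if $C|Y=2^Y$; $X(C)$ is the family of shattered sets; VC-dimension is the maximum size of a shattered set; $C$ is maximum if $|C|=\sum_{i=0}^d\binom{n}{i}$, $d$ its VC-dimension. A cube of $2^X$ is $\{T\cup Z:Z\subseteq Y\}$ with $Y\subseteq X$, $T\subseteq X\setminus Y$; $Y=\mathrm{supp}$ is its support and $T$ its tag; a cube of $C$ is a cube contained in $C$. For $x\in X$: $c_x=c|(X\setminus\{x\})$ and $C_x=\{c_x:c\in C\}$ (restriction, a class on $X\setminus\{x\}$); the reduction $C^x$ is the class on $X\setminus\{x\}$ consisting of the tags of all cubes of $C$ with support $\{x\}$ (i.e. of $c\setminus\{x\}$ for all $c$ with $c,c\Delta\{x\}\in C$), and for such $c$, $c^x=c\setminus\{x\}$; the same notation applies to $D$ and to a cube $Q$ (so $Q_x$, $Q^y$, $s_x$, $s^y$). A missed simplex for $(C,D)$ is $\sigma\in X(C)\setminus X(D)$; an incomplete cube for $(C,D)$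 is a cube $Q$ of $C$ whose support is a missed simplex; its source is the unique $c\in Q$ with $c|\mathrm{supp}(Q)\notin D|\mathrm{supp}(Q)$. (Incomplete cubes and sources for $(C_x,D_x)$ and $(C^y,D^y)$ are defined in the same way.) *)

(* Concepts over a finite domain X are sets {set T}; a class
   on a ground set G : {set T} is a family C : {set {set T}} of subsets of G. *)
From mathcomp Require Import all_boot all_order all_algebra.
Set Implicit Arguments. Unset Strict Implicit. Unset Printing Implicit Defensive.
Import GRing.Theory Num.Theory.

Section VC.
Variable T : finType.

Definition restrC (C : {set {set T}}) (Y : {set T}) : {set {set T}} :=
  [set c :&: Y | c in C].

Definition shattered (C : {set {set T}}) (Y : {set T}) : bool :=
  restrC C Y == powerset Y.

Definition class_on (G : {set T}) (C : {set {set T}}) : Prop :=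
  forall c, c \in C -> c \subset G.

(* VC-dimension of C is d (d = -1 exactly when no set is shattered, i.e. C empty) *)
Definition vcdim_is (C : {set {set T}}) (d : int) : Prop :=
  (forall Y, shattered C Y -> (Posz #|Y| <= d)%R) /\
  (d = (-1)%R \/ exists Y, shattered C Y /\ Posz #|Y| = d).

Definition maximum (G : {set T}) (C : {set {set T}}) (d : int) : Prop :=
  [/\ class_on G C, vcdim_is C d &
      #|C| = \sum_(i < `|(d + 1)%R|%N) 'C(#|G|, i)].

Definition cube (Y Tg : {set T}) : {set {set T}} :=
  [set Tg :|: Z | Z in powerset Y].

(* Q is an incomplete cube for (C,D) (classes on ground set G) with support sigma:
   a cube of 2^G contained in C whose support is a missed simplex of (C,D). *)
Definition incomplete_cube (G : {set T}) (C D Q : {set {set T}}) (sigma : {set T})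
  : Prop :=
  exists Tg : {set T},
    [/\ sigma \subset G, Tg \subset G :\: sigma, Q = cube sigma Tg,
        Q \subset C & shattered C sigma && ~~ shattered D sigma].

Definition is_source (D Q : {set {set T}}) (sigma s : {set T}) : Prop :=
  [/\ s \in Q, s :&: sigma \notin restrC D sigma &
      forall c, c \in Q -> c :&: sigma \notin restrC D sigma -> c = s].

Definition toggle (c : {set T}) (y : T) : {set T} :=
  if y \in c then c :\ y else y |: c.

(* the reduction C^y : tags of cubes of C with support {y} *)
Definition reduction (C : {set {set T}}) (y : T) : {set {set T}} :=
  [set c :\ y | c in [set c in C | toggle c y \in C]].

End VC.

(* Restriction to X - {x} (x outside sigma) maps the cube Q to a cube with the same support
   sigma, and reduction at y in sigma maps it to a cube with support sigma - {y} and the same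
   tag; the support stays shattered by the image of C, and it stays unshattered by the image
   of D because a pattern on sigma - {y} realised in D^y lifts to a pattern on sigma realised
   in D.  For (i) uniqueness of the source is inherited directly.  For (ii) it comes from
   counting: the restriction and the reduction of a class attaining the Sauer-Shelah bound
   attain it too, so D^y restricted to sigma - {y}, a set of size at most d - 1, misses at most
   one pattern, while an element of a cube is determined by its trace on the support. *)

From mathcomp Require Import all_boot all_algebra zify.
Import GRing.Theory.

Set Implicit Arguments.
Unset Strict Implicit.
Unset Printing Implicit Defensive.

Definition sauer_bound (j m : nat) : nat := \sum_(i < j) 'C(m, i).

Lemma sauer_boundS j m : sauer_bound j m.+1 = sauer_bound j m + sauer_bound j.-1 m.
Proof.
case: j => [|j]; first by rewrite /sauer_bound !big_ord0.
rewrite /sauer_bound big_ord_recl [in RHS]big_ord_recl !bin0 -addnA -big_split /=.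
by under eq_bigr => i _ do rewrite binS addnC.
Qed.

Lemma sauer_bound_pow2 m : sauer_bound m.+1 m = 2 ^ m.
Proof.
rewrite /sauer_bound -[2]/(1 + 1) expnDn.
by apply: eq_bigr => i _; rewrite !exp1n !muln1.
Qed.

Lemma leq_sauer_bound j k m : j <= k -> sauer_bound j m <= sauer_bound k m.
Proof.
move=> le_jk; rewrite /sauer_bound (big_ord_widen _ _ le_jk) big_mkcond.
by apply: leq_sum => i _; case: ifP.
Qed.

Lemma pow2_leq_sauer_bound m j : m <= j -> (2 ^ m).-1 <= sauer_bound j m.
Proof.
move=> le_mj; apply: leq_trans (leq_sauer_bound m le_mj).
by rewrite -sauer_bound_pow2 /sauer_bound big_ord_recr /= binn addn1.
Qed.

Section Classes.
Variable T : finType.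
Implicit Types (C D E F Q : {set {set T}}) (A B G S Y Z Tg c e : {set T}) (x : T).

Lemma setD1_id c x : x \notin c -> c :\ x = c.
Proof. by move=> xNc; apply/setDidPl; rewrite disjoint_sym disjoints1. Qed.

Lemma restrC_restrC E A B : A \subset B -> restrC (restrC E B) A = restrC E A.
Proof.
move=> AB; rewrite /restrC -imset_comp; apply: eq_imset => c /=.
by rewrite -setIA (setIidPr AB).
Qed.

Lemma restrC_id G E : class_on G E -> restrC E G = E.
Proof.
by move=> EG; rewrite /restrC -[RHS]imset_id; apply: eq_in_imset => c /EG /setIidPl.
Qed.

Lemma mem_reduction E x e :
  (e \in reduction E x) = [&& x \notin e, e \in E & x |: e \in E].
Proof.
apply/imsetP/and3P => [[c /[!inE] /andP [cE tcE] ->] | [xNe eE xeE]].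
  rewrite !inE eqxx /=; rewrite /toggle in tcE.
  case: ifP tcE => [xc | /negbT xNc] tcE; first by rewrite setD1K.
  by rewrite setD1_id.
exists (x |: e); last by rewrite setU1K.
by rewrite inE xeE /toggle setU11 setU1K.
Qed.

Lemma reductionS E F x : E \subset F -> reduction E x \subset reduction F x.
Proof.
move=> EF; apply/subsetP => e; rewrite !mem_reduction.
by case/and3P => -> /(subsetP EF) -> /(subsetP EF) ->.
Qed.

Lemma shatteredP E Y :
  reflect (forall Z, Z \subset Y -> exists2 c, c \in E & c :&: Y = Z) (shattered E Y).
Proof.
apply: (iffP eqP) => [EY Z ZY | EY].
  have : Z \in restrC E Y by rewrite EY powersetE.
  by case/imsetP => c cE ->; exists c.
apply/eqP; rewrite eqEsubset; apply/andP; split; apply/subsetP => Z.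
  by case/imsetP => c _ ->; rewrite powersetE subsetIr.
by rewrite powersetE => /EY [c cE <-]; apply: imset_f.
Qed.

Lemma shatteredS E F Y : E \subset F -> shattered E Y -> shattered F Y.
Proof.
move=> EF /shatteredP EY; apply/shatteredP => Z /EY [c cE <-].
by exists c; first exact: (subsetP EF).
Qed.

Lemma shattered_restrC E B Y : shattered (restrC E B) Y = (Y \subset B) && shattered E Y.
Proof.
apply/idP/andP => [/shatteredP EY | [YB]]; last by rewrite /shattered restrC_restrC.
have [_ /imsetP [c _ ->] cBY] := EY Y (subxx Y).
have YB : Y \subset B by rewrite -cBY -setIA subIset // subsetIl orbT.
split=> //; apply/shatteredP => Z ZY.
have [_ /imsetP [c' c'E ->] <-] := EY Z ZY.
by exists c'; rewrite // -setIA (setIidPr YB).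
Qed.

Lemma mem_restrC_reduction E S c y : y \in S ->
  (c :\ y) :&: (S :\ y) \in restrC (reduction E y) (S :\ y) -> c :&: S \in restrC E S.
Proof.
move=> yS /imsetP [e /[!mem_reduction] /and3P [yNe eE yeE] ceS].
apply/imsetP; exists (if y \in c then y |: e else e); first by case: ifP.
apply/setP => t; move/setP/(_ t): ceS; rewrite !inE.
by case: (t =P y) => [->|/eqP/negbTE ty]; case: ifP;
  rewrite ?inE ?eqxx ?ty ?(negbTE yNe) ?yS ?andbT.
Qed.

Lemma shattered_reduction E x Y :
  shattered (reduction E x) Y -> x \notin Y /\ shattered E (x |: Y).
Proof.
move=> /shatteredP EY; have [e] := EY Y (subxx Y).
rewrite mem_reduction => /and3P [xNe _ _] eY.
have xNY : x \notin Y by rewrite -eY inE (negbTE xNe).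
split=> //; apply/shatteredP => Z ZxY; have ZY : Z :\ x \subset Y by rewrite subDset.
have /imsetP [c cE] : Z :&: (x |: Y) \in restrC E (x |: Y).
  apply: (mem_restrC_reduction (setU11 x Y)); rewrite setU1K // (setIidPl ZY).
  by have [e' e'E <-] := EY _ ZY; apply: imset_f.
by rewrite (setIidPl ZxY) => ->; exists c.
Qed.

Lemma class_on_restrC E B : class_on B (restrC E B).
Proof. by move=> _ /imsetP [c _ ->]; rewrite subsetIr. Qed.

Lemma class_on_reduction G E x : class_on G E -> class_on (G :\ x) (reduction E x).
Proof. by move=> EG e /[!mem_reduction] /and3P [xNe /EG eG _]; rewrite subsetD1 eG. Qed.

Definition vcdim_lt E j := forall Y, shattered E Y -> #|Y| < j.

Lemma vcdim_lt_restrC E B j : vcdim_lt E j -> vcdim_lt (restrC E B) j.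
Proof. by move=> Ej Y; rewrite shattered_restrC => /andP [_ /Ej]. Qed.

Lemma vcdim_lt_reduction E x j : vcdim_lt E j -> vcdim_lt (reduction E x) j.-1.
Proof.
move=> Ej Y /shattered_reduction [xNY /Ej]; rewrite cardsU1 xNY.
by case: j {Ej}.
Qed.

Lemma card_restrC_reduction G E x : class_on G E -> x \in G ->
  #|E| = #|restrC E (G :\ x)| + #|reduction E x|.
Proof.
move=> EG xG; pose Px := [set c : {set T} | x \in c].
set E1 := E :&: Px; set E0 := E :\: Px; pose dropx c := c :\ x.
have inj1 : {in E1 &, injective dropx}.
  move=> c1 c2 /[!inE] /andP [_ xc1] /andP [_ xc2] eq12.
  by rewrite -(setD1K xc1) -(setD1K xc2) [_ :\ x]eq12.
have imE0 : dropx @: E0 = E0.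
  rewrite -[RHS]imset_id; apply: eq_in_imset => c.
  by rewrite !inE => /andP [xNc _]; apply: setD1_id.
have restrE : restrC E (G :\ x) = dropx @: E1 :|: E0.
  rewrite -imE0 -imsetU setID; apply: eq_in_imset => c /EG cG.
  by rewrite setIDA (setIidPl cG).
have redE : reduction E x = dropx @: E1 :&: E0.
  apply/setP => e; have mem1 : (e \in dropx @: E1) = (x \notin e) && (x |: e \in E).
    apply/imsetP/andP => [[c /[!inE] /andP [cE xc] ->] | [xNe xeE]].
      by rewrite !inE eqxx setD1K.
    by exists (x |: e); rewrite /dropx ?setU1K // /E1 !inE eqxx xeE.
  by rewrite mem_reduction inE mem1 /E0 !inE; case: (x \in e); case: (e \in E); case: (_ \in E).
by rewrite -(cardsID Px E) -(card_in_imset inj1) -cardsUI -restrE -redE.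
Qed.

Lemma shattered_set0 E c : c \in E -> shattered E set0.
Proof.
by move=> cE; apply/shatteredP => Z; rewrite subset0 => /eqP ->; exists c; rewrite ?setI0.
Qed.

Theorem sauer_shelah G E j : class_on G E -> vcdim_lt E j -> #|E| <= sauer_bound j #|G|.
Proof.
move cardG: #|G| => m; elim: m G cardG E j => [|m IH] G cardG E j EG Ej.
  have E_sub : E \subset [set set0].
    by apply/subsetP => c /EG; rewrite (cards0_eq cardG) subset0 inE.
  case: j Ej => [|j] Ej.
    by case: (set_0Vmem E) => [-> | [c /shattered_set0 /Ej]]; rewrite ?cards0.
  rewrite /sauer_bound big_ord_recl bin0 (leq_trans (subset_leq_card E_sub)) ?cards1 //.
have [x xG] : exists x, x \in G by apply/set0Pn; rewrite -card_gt0 cardG.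
have cardGx : #|G :\ x| = m by apply/eq_add_S; rewrite -cardG (cardsD1 x G) xG.
rewrite (card_restrC_reduction EG xG) sauer_boundS leq_add //.
  by apply: (IH _ cardGx); [exact: class_on_restrC | exact: vcdim_lt_restrC].
by apply: (IH _ cardGx); [exact: class_on_reduction | exact: vcdim_lt_reduction].
Qed.

Definition sauer_extremal G E j :=
  [/\ class_on G E, vcdim_lt E j & #|E| = sauer_bound j #|G|].

Lemma maximum_extremal G E j : maximum G E (Posz j - 1) -> sauer_extremal G E j.
Proof.
case=> EG [Ej _] cardE; split=> // [Y /Ej | ]; first by lia.
by rewrite cardE subrK.
Qed.

Lemma extremal_restrC_reduction G E j x : sauer_extremal G E j -> x \in G ->
  sauer_extremal (G :\ x) (restrC E (G :\ x)) j /\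
  sauer_extremal (G :\ x) (reduction E x) j.-1.
Proof.
case=> EG Ej cardE xG.
have EGx := @class_on_restrC E (G :\ x).
have EjGx := vcdim_lt_restrC (B := G :\ x) Ej.
have ExGx := class_on_reduction (x := x) EG.
have Exj := vcdim_lt_reduction (x := x) Ej.
(* The two Sauer-Shelah bounds add up to the attained bound for E, so both are attained. *)
have := sauer_shelah EGx EjGx; have := sauer_shelah ExGx Exj.
move: cardE; rewrite (card_restrC_reduction EG xG) (cardsD1 x G) xG sauer_boundS.
by split; split=> //; lia.
Qed.

Lemma extremal_restrC G E j A : sauer_extremal G E j -> A \subset G ->
  sauer_extremal A (restrC E A) j.
Proof.
move cardGA: #|G :\: A| => k; elim: k G E cardGA => [|k IH] G E cardGA extE AG.
  have GA : G = A by apply/eqP; rewrite eqEsubset AG -setD_eq0 -cards_eq0 cardGA.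
  by case: extE; rewrite -GA => EG; rewrite (restrC_id EG).
have [x] : exists x, x \in G :\: A by apply/set0Pn; rewrite -card_gt0 cardGA.
rewrite inE => /andP [xNA xG]; have [extEx _] := extremal_restrC_reduction extE xG.
have AGx : A \subset G :\ x by rewrite subsetD1 AG xNA.
rewrite -(restrC_restrC E AGx); apply: IH extEx AGx.
by apply/eq_add_S; rewrite -cardGA (cardsD1 x (G :\: A)) inE xNA xG !setDDl setUC.
Qed.

Lemma extremal_missed_le1 G E j A : sauer_extremal G E j -> A \subset G -> #|A| <= j ->
  #|powerset A :\: restrC E A| <= 1.
Proof.
move=> extE AG leAj; have [EA _ cardEA] := extremal_restrC extE AG.
have EA_sub : restrC E A \subset powerset A.
  by apply/subsetP => c /EA; rewrite powersetE.
have := pow2_leq_sauer_bound leAj.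
by rewrite cardsD (setIidPr EA_sub) card_powerset cardEA; lia.
Qed.

Lemma mem_cube S Tg c : [disjoint Tg & S] -> (c \in cube S Tg) = (c :\: S == Tg).
Proof.
move=> TgS; apply/imsetP/eqP => [[Z] /[!powersetE] ZS -> | <-].
  by move: ZS; rewrite setDUl (setDidPl TgS) -setD_eq0 => /eqP ->; rewrite setU0.
by exists (c :&: S); rewrite ?powersetE ?subsetIr // setUC setID.
Qed.

Lemma cube_trace_inj S Tg : [disjoint Tg & S] ->
  {in cube S Tg &, injective (fun c => c :&: S)}.
Proof.
move=> TgS c1 c2; rewrite !mem_cube // => /eqP c1S /eqP c2S /= eq12.
by rewrite -(setID c1 S) -(setID c2 S) eq12 c1S c2S.
Qed.

Lemma shattered_cube S Tg : [disjoint Tg & S] -> shattered (cube S Tg) S.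
Proof.
move=> TgS; apply/shatteredP => Z ZS; exists (Tg :|: Z).
  by apply: imset_f; rewrite powersetE.
by rewrite setIUl (setIidPl ZS) (disjoint_setI0 TgS) set0U.
Qed.

Lemma restrC_cube S Tg B : S \subset B -> restrC (cube S Tg) B = cube S (Tg :&: B).
Proof.
move=> SB; rewrite /restrC /cube -imset_comp; apply: eq_in_imset => Z.
by rewrite powersetE => ZS /=; rewrite setIUl (setIidPl (subset_trans ZS SB)).
Qed.

Lemma reduction_cube S Tg y : y \in S -> [disjoint Tg & S] ->
  reduction (cube S Tg) y = cube (S :\ y) Tg.
Proof.
move=> yS TgS; have TgSy : [disjoint Tg & S :\ y] by apply: disjointWr TgS; apply: subsetDl.
apply/setP => c; rewrite mem_reduction !mem_cube // setDUl setDDr.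
have -> : [set y] :\: S = set0 by apply/eqP; rewrite setD_eq0 sub1set.
rewrite set0U andbb; case: (boolP (y \in c)) => [yc | yNc] /=.
  apply/esym/negP => /eqP TgE; have yTg : y \in Tg by rewrite -TgE !inE eqxx yc orbT.
  by rewrite (disjointFr TgS yTg) in yS.
by rewrite disjoint_setI0 ?setU0 // disjoint_sym disjoints1.
Qed.

Lemma source_cube D S Tg s : [disjoint Tg & S] -> s \in cube S Tg ->
  s :&: S \notin restrC D S -> #|powerset S :\: restrC D S| <= 1 ->
  is_source D (cube S Tg) S s.
Proof.
move=> TgS sQ sN missed_le1; split=> // c cQ cN.
apply: (cube_trace_inj TgS cQ sQ); apply: (card_le1_eqP missed_le1);
  by rewrite inE ?cN ?sN powersetE subsetIr.
Qed.

Lemma incomplete_cube_restrC G C D Q S x : x \notin S -> incomplete_cube G C D Q S ->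
  incomplete_cube (G :\ x) (restrC C (G :\ x)) (restrC D (G :\ x)) (restrC Q (G :\ x)) S.
Proof.
move=> xNS [Tg [SG /[!subsetD] /andP [_ TgS] -> QC shCD]].
have SGx : S \subset G :\ x by rewrite subsetD1 SG xNS.
exists (Tg :&: (G :\ x)); split=> //.
- by rewrite subsetD subsetIr (disjointWl (subsetIl _ _) TgS).
- exact: restrC_cube.
- exact: imsetS.
- by rewrite !shattered_restrC SGx.
Qed.

Lemma source_restrC D Q S s B : S \subset B -> is_source D Q S s ->
  is_source (restrC D B) (restrC Q B) S (s :&: B).
Proof.
move=> SB [sQ sN s_uniq]; have traceB c : c :&: B :&: S = c :&: S.
  by rewrite -setIA (setIidPr SB).
rewrite /is_source restrC_restrC // traceB; split=> [|//|_ /imsetP [c cQ ->]].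
  exact: imset_f.
by rewrite traceB => /(s_uniq c cQ) ->.
Qed.

Lemma incomplete_cube_reduction G C D Q S y : y \in S -> incomplete_cube G C D Q S ->
  incomplete_cube (G :\ y) (reduction C y) (reduction D y) (reduction Q y) (S :\ y).
Proof.
move=> yS [Tg [SG /[!subsetD] /andP [TgG TgS] -> QC /andP [_ nshD]]].
have TgSy : [disjoint Tg & S :\ y] by apply: disjointWr TgS; apply: subsetDl.
have redQ := reduction_cube yS TgS.
exists Tg; split.
- exact: setSD.
- by rewrite setDDl setD1K // subsetD TgG.
- exact: redQ.
- exact: reductionS.
- apply/andP; split.
    by apply: shatteredS (reductionS y QC) _; rewrite redQ shattered_cube.
  by apply: contra nshD => /shattered_reduction [_]; rewrite setD1K.
Qed.

Lemma source_reduction G C D Q S s y : y \in S ->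
  incomplete_cube G C D Q S -> is_source D Q S s ->
  #|powerset (S :\ y) :\: restrC (reduction D y) (S :\ y)| <= 1 ->
  is_source (reduction D y) (reduction Q y) (S :\ y) (s :\ y).
Proof.
move=> yS [Tg [_ /[!subsetD] /andP [_ TgS] -> _ _]] [sQ sN _] missed_le1.
have TgSy : [disjoint Tg & S :\ y] by apply: disjointWr TgS; apply: subsetDl.
rewrite (reduction_cube yS TgS); apply: source_cube => //.
  by move: sQ; rewrite !mem_cube // setDDl setD1K.
by apply: contra sN; apply: mem_restrC_reduction.
Qed.
End Classes.

Theorem lemma5p4 (T : finType) (C D : {set {set T}}) (d : nat)
  (Q : {set {set T}}) (sigma s : {set T}) (x y : T) :
  maximum [set: T] C (Posz d) ->
  maximum [set: T] D (Posz d - 1)%R ->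
  D \subset C ->
  incomplete_cube [set: T] C D Q sigma ->
  is_source D Q sigma s ->
  x \notin sigma -> y \in sigma ->
  (exists sigma' : {set T},
     incomplete_cube ([set: T] :\ x)
       (restrC C ([set: T] :\ x)) (restrC D ([set: T] :\ x))
       (restrC Q ([set: T] :\ x)) sigma' /\
     is_source (restrC D ([set: T] :\ x)) (restrC Q ([set: T] :\ x))
       sigma' (s :&: ([set: T] :\ x))) /\
  (exists sigma' : {set T},
     incomplete_cube ([set: T] :\ y)
       (reduction C y) (reduction D y) (reduction Q y) sigma' /\
     is_source (reduction D y) (reduction Q y) sigma' (s :\ y)).
Proof.
move=> [_ [vcC _] _] maxD _ Qinc Qsrc xNS yS; split.
  exists sigma; split; first exact: incomplete_cube_restrC.
  by apply: source_restrC Qsrc; rewrite subsetD1 subsetT xNS.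
exists (sigma :\ y); split; first exact: incomplete_cube_reduction.
apply: (source_reduction yS Qinc Qsrc).
have [_ extDy] := extremal_restrC_reduction (maximum_extremal maxD) (in_setT y).
apply: (extremal_missed_le1 extDy); first by rewrite setSD ?subsetT.
have [_ [_ _ _ _ /andP [shC _]]] := Qinc.
have leSd : #|sigma| <= d by rewrite -lez_nat vcC.
by move: leSd; rewrite (cardsD1 y) yS; lia.
Qed.
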